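(* Consider a seller with one item and a single ex-interim rational buyer; the item's quality $q\in Q=[q_1,q_2]$ has density $g$ and is observed only by the seller; the buyer's valuation is $v(q)\ge0$, monotone increasing in $q$. Consider the problem of maximizing $Rev_{sig}(\pi,p)=p\int_Q\pi(q)g(q)\,\mathrm{d}q$ over $\pi:Q\to[0,1]$ and $p$ subject to $\int_Q\pi(q)[v(q)-p]g(q)\,\mathrm{d}q\ge0$ and $\int_Q\pi(q)[v(q)-p]g(q)\,\mathrm{d}q\ge\mathbb{E}_{q}[v(q)]-p$. Then $\pi^*(q)=1$ for all $q\in Q$ and $p^*=\mathbb{E}_q[v(q)]$ form an optimal solution.
   Context: $\pi(q)$ is the probability that the seller sends signal 1 (''buy'') at quality $q$, and signal 0 (''not buy'') otherwise; the constraints express obedience of an ex-interim rational buyer, who buys iff his posterior expected valuation of the item is at least $p$. $\mathbb{E}_q$ denotes expectation under the prior density $g$. *)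

From HB Require Import structures.
From mathcomp Require Import all_boot all_order all_algebra.
From mathcomp Require Import all_classical all_reals all_analysis.
Set Implicit Arguments. Unset Strict Implicit. Unset Printing Implicit Defensive.
Import Order.TTheory GRing.Theory Num.Theory.
Local Open Scope classical_set_scope.
Local Open Scope ring_scope.

Definition Qset {R : realType} (q1 q2 : R) : set R := `[q1, q2].

Definition Eq {R : realType} (q1 q2 : R) (g v : R -> R) : R :=
  Rintegral lebesgue_measure (Qset q1 q2) (fun q => v q * g q).

Definition Rev_sig {R : realType} (q1 q2 : R) (g : R -> R)
  (pi : R -> R) (p : R) : R :=
  p * Rintegral lebesgue_measure (Qset q1 q2) (fun q => pi q * g q).

Definition admissible_signal {R : realType} (q1 q2 : R) (pi : R -> R) : Prop :=
  measurable_fun (Qset q1 q2) pi /\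
  (forall q, q \in Qset q1 q2 -> 0 <= pi q <= 1).

Definition obedient {R : realType} (q1 q2 : R) (g v : R -> R)
  (pi : R -> R) (p : R) : Prop :=
  let lhs := Rintegral lebesgue_measure (Qset q1 q2)
               (fun q => pi q * (v q - p) * g q) in
  0 <= lhs /\ Eq q1 q2 g v - p <= lhs.

Definition feasible {R : realType} (q1 q2 : R) (g v : R -> R)
  (pi : R -> R) (p : R) : Prop :=
  admissible_signal q1 q2 pi /\ obedient q1 q2 g v pi p.

Definition optimal_solution {R : realType} (q1 q2 : R) (g v : R -> R)
  (pi : R -> R) (p : R) : Prop :=
  feasible q1 q2 g v pi p /\
  forall pi' p', feasible q1 q2 g v pi' p' ->
    Rev_sig q1 q2 g pi' p' <= Rev_sig q1 q2 g pi p.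

From HB Require Import structures.
From mathcomp Require Import all_boot all_order all_algebra.
From mathcomp Require Import all_classical all_reals all_analysis.
From mathcomp Require Import ring.
Import Order.TTheory GRing.Theory Num.Theory.
Local Open Scope classical_set_scope.
Local Open Scope ring_scope.

(* The first obedience constraint reads p \int pi g <= \int pi v g, and since
   0 <= pi <= 1 and v g >= 0 its right-hand side is at most E[v]; so no
   feasible scheme earns more than E[v].  Always recommending "buy" at price
   E[v] makes the obedience integral \int (v - E[v]) g vanish, which meets both
   constraints, and earns exactly E[v] because g is a density. *)

Section UnitWeightedIntegrals.
Context {d : measure_display} {T : measurableType d} {R : realType}.
Context {mu : {measure set T -> \bar R}} {D : set T} (mD : measurable D).

Lemma integrableZl_EFin (k : R) (f : T -> R) :
  mu.-integrable D (EFin \o f) ->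
  mu.-integrable D (EFin \o (fun x => k * f x)).
Proof.
by move=> fi; apply: eq_integrable (integrableZl mD k fi).
Qed.

Lemma integrable_unit_mulr (w f : T -> R) :
  measurable_fun D w -> {in D, forall x, 0 <= w x <= 1} ->
  mu.-integrable D (EFin \o f) ->
  mu.-integrable D (EFin \o (fun x => w x * f x)).
Proof.
move=> mw w01 fi.
have bounded_w : [bounded w x | x in D].
  exists 1; split => // M M1 x Dx /=.
  have /andP[w0 w1] := w01 x (mem_set Dx).
  by rewrite ger0_norm // (le_trans w1) // ltW.
by apply: eq_integrable (integrableMr mD mw bounded_w fi).
Qed.

Lemma Rintegral_weighted_surplus (w v g : T -> R) (p : R) :
  mu.-integrable D (EFin \o (fun x => w x * g x)) ->
  mu.-integrable D (EFin \o (fun x => w x * (v x * g x))) ->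
  \int[mu]_(x in D) (w x * (v x - p) * g x) =
  \int[mu]_(x in D) (w x * (v x * g x)) - p * \int[mu]_(x in D) (w x * g x).
Proof.
move=> wgi wvgi.
rewrite (@eq_Rintegral _ _ _ mu _ (fun x => w x * (v x * g x) - p * (w x * g x)));
  last by move=> x _; ring.
by rewrite RintegralB // ?RintegralZl //; exact: integrableZl_EFin.
Qed.

End UnitWeightedIntegrals.

Section SignalingProblem.
Context {R : realType} {q1 q2 : R} {g v : R -> R}.
Hypothesis g_ge0 : forall q, q \in Qset q1 q2 -> 0 <= g q.
Hypothesis g_int : lebesgue_measure.-integrable (Qset q1 q2) (fun q => (g q)%:E).
Hypothesis g_density : Rintegral lebesgue_measure (Qset q1 q2) g = 1.
Hypothesis v_ge0 : forall q, q \in Qset q1 q2 -> 0 <= v q.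
Hypothesis vg_int :
  lebesgue_measure.-integrable (Qset q1 q2) (fun q => (v q * g q)%:E).

Let mQ : measurable (Qset q1 q2 : set (measurableTypeR R)).
Proof. exact: measurable_itv. Qed.

Lemma Rev_sig_always_buy (p : R) : Rev_sig q1 q2 g (fun _ => 1) p = p.
Proof.
rewrite /Rev_sig -[RHS]mulr1; congr (_ * _).
by rewrite -[RHS]g_density; apply: eq_Rintegral => q _; rewrite mul1r.
Qed.

Lemma feasible_always_buy_at_mean :
  feasible q1 q2 g v (fun _ => 1) (Eq q1 q2 g v).
Proof.
have one01 (q : R) : q \in Qset q1 q2 -> 0 <= (1 : R) <= 1 by rewrite ler01 lexx.
split; first by split; [exact: measurable_cst | exact: one01].
have one_int (f : R -> R) := @integrable_unit_mulr _ _ _ lebesgue_measure _ mQ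
  (fun _ => 1) f (measurable_cst _) one01.
rewrite /obedient Rintegral_weighted_surplus ?one_int //.
have -> : Rintegral lebesgue_measure (Qset q1 q2) (fun q => 1 * g q) = 1.
  by rewrite -[RHS]g_density; apply: eq_Rintegral => q _; rewrite mul1r.
have -> : Rintegral lebesgue_measure (Qset q1 q2) (fun q => 1 * (v q * g q)) =
    Eq q1 q2 g v by apply: eq_Rintegral => q _; rewrite mul1r.
by rewrite mulr1 subrr lexx.
Qed.

Lemma feasible_Rev_sig_le_mean (pi : R -> R) (p : R) :
  feasible q1 q2 g v pi p -> Rev_sig q1 q2 g pi p <= Eq q1 q2 g v.
Proof.
move=> [[mpi pi01] [surplus_ge0 _]].
have pi_int (f : R -> R) := @integrable_unit_mulr _ _ _ lebesgue_measure _ mQ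
  pi f mpi pi01.
move: surplus_ge0; rewrite Rintegral_weighted_surplus ?pi_int //.
rewrite subr_ge0 => revenue_le; apply: le_trans revenue_le _.
apply: le_Rintegral; rewrite ?pi_int // => q Qq.
have /andP[pi0 pi1] := pi01 q (mem_set Qq).
by rewrite ler_piMl // mulr_ge0 // ?v_ge0 ?g_ge0 // mem_set.
Qed.

End SignalingProblem.

Theorem mainTheorem6 (R : realType) (q1 q2 : R) (g v : R -> R)
  (hq : q1 < q2)
  (g_meas : measurable_fun (Qset q1 q2) g)
  (g_ge0 : forall q, q \in Qset q1 q2 -> 0 <= g q)
  (g_int : lebesgue_measure.-integrable (Qset q1 q2) (fun q => (g q)%:E))
  (g_density : Rintegral lebesgue_measure (Qset q1 q2) g = 1)
  (v_ge0 : forall q, q \in Qset q1 q2 -> 0 <= v q)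
  (v_mono : forall x y, x \in Qset q1 q2 -> y \in Qset q1 q2 ->
              x <= y -> v x <= v y)
  (vg_int : lebesgue_measure.-integrable (Qset q1 q2)
              (fun q => (v q * g q)%:E)) :
  optimal_solution q1 q2 g v (fun _ => 1) (Eq q1 q2 g v).
Proof.
split; first exact: feasible_always_buy_at_mean g_int g_density vg_int.
move=> pi p /(feasible_Rev_sig_le_mean g_ge0 g_int v_ge0 vg_int).
by rewrite (Rev_sig_always_buy g_density).
Qed.
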